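(* Let $f:[c_0,c_N]\to[c_0,c_N]$ satisfy properties P1–P6 with contraction pieces $X_1,\dots,X_N$ and slope $\lambda$, and suppose that every atom of generation $1$ of $f$ contains at most one point of $\Delta_f=\{c_1,\dots,c_{N-1}\}$. Then there exists a well-cutting orbit $\{\xi_r\}_{r\in\mathbb{N}}$ of $f$ such that, for any map $g$ constructed from it as below, every atom of generation $1$ of $g$ contains at most one point of $\Delta_g$. Construction of $g$: $\phi(x)=x+\sum_{n\geqslant1,\ \xi_n<x}\lambda^n$ on $[c_0,c_N]$; $G_r:=(\phi(\xi_r),\phi(\xi_r)+\lambda^r]$ for $r\geqslant1$; $\Delta_g:=\phi(\Delta_f\cup\{\xi_0\})$; $g:[\phi(c_0),\phi(c_N)]\to[\phi(c_0),\phi(c_N)]$ is any map with $g(y)=\phi\circ f\circ\phi^{-1}(y)$ for $y\in\phi([c_0,c_N])\setminus\Delta_g$ and $g(y)=\lambda(y-\phi(\xi_r))+\phi(\xi_{r+1})$ for $y\in G_r$, $r\geqslant1$; its contraction pieces are $Y_1=[d_0,d_1)$, $Y_j=(d_{j-1},d_j)$ ($1<j<N+1$), $Y_{N+1}=(d_N,d_{N+1}]$, where $d_0<\dots<d_{N+1}$ are the points of $\phi(\{c_0,\dots,c_N\}\cup\{\xi_0\})$.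
   Context: Setting: $N\geqslant2$, $c_0<\dots<c_N$, $X=[c_0,c_N]$, $X_1=[c_0,c_1)$, $X_i=(c_{i-1},c_i)$ ($1<i<N$), $X_N=(c_{N-1},c_N]$; $f_i$ the continuous extension of $f|_{X_i}$ to $\overline{X_i}$; $\widetilde X_f:=\bigcap_{n\geqslant0}f^{-n}(X\setminus\Delta_f)$. Atoms of a map $h$ with pieces $Z_i$ on an interval $Z$: $F_i(A):=\overline{h(A\cap Z_i)}$, $A_{i_1\dots i_n}:=F_{i_n}\circ\dots\circ F_{i_1}(Z)$ is an atom of generation $n$ if non-empty (so atoms of generation 1 are the sets $\overline{h(Z_i)}$). $\mathcal{A}_n$ is the set of atoms of generation $n$ of $f$, $\mathcal{A}_n(x):=\{A\in\mathcal{A}_n:\exists t\in\mathbb{N},f^{t+n}(x)\in A\}$; attractor $\Lambda_f:=\bigcap_{n\geqslant1}\bigcup_{A\in\mathcal{A}_n}A$. $\Delta_{lr}(x)$ is the set of $c_i\in\Delta_f$ such that for every $n\geqslant1$ there is $A\in\mathcal{A}_n(x)$ with $c_i\in A$, $f^{t+n}(x)\in A\cap X_i$ and $f^{t'+n}(x)\in A\cap X_{i+1}$ for some $t,t'\in\mathbb{N}$. P1: $f$ is discontinuous at every point of $\Delta_f$ and $f|_{X_i}$ is affine with slope $\lambda\in(0,1)$ for all $i$. P2 (separation): each $f_i$ injective and $f_i(\overline{X_i})\cap f_j(\overline{X_j})=\emptyset$ for $i\neq j$. P3: $\Lambda_f$ is a Cantor set. P4: $\bigcup_{i=1}^{N-1}\{f_i(c_i),f_{i+1}(c_i)\}\subset\widetilde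 X_f$. P5: for some $i$, $\{f^n(f_i(c_i))\}_n$ or $\{f^n(f_{i+1}(c_i))\}_n$ is dense in $\Lambda_f$. P6: $c_i\in\Delta_{lr}(x)$ for all $x\in\widetilde X_f$ and $i\in\{1,\dots,N-1\}$. A well-cutting orbit of $f$ is an orbit $\{\xi_r\}_{r\in\mathbb{N}}$, $\xi_r=f^r(\xi_0)$, with $\xi_0\in\Lambda_f\cap\widetilde X_f$, containing no point of: (1) the boundary points of the gaps of the Cantor set $\Lambda_f$; (2) the forward orbits of $c_0$ and $c_N$; (3) the forward orbits of $f_i(c_i)$ and $f_{i+1}(c_i)$, $i\in\{1,\dots,N-1\}$. *)

From Stdlib Require Import Reals Lra List.
From Coquelicot Require Import Coquelicot.
Open Scope R_scope.

Definition rclosure (A : R -> Prop) : R -> Prop :=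
  fun x => forall eps, 0 < eps -> exists a, A a /\ Rabs (x - a) < eps.

Definition piece (c : nat -> R) (K i : nat) (x : R) : Prop :=
  (if Nat.eqb i 1 then c 0%nat <= x else c (i - 1)%nat < x) /\
  (if Nat.eqb i K then x <= c K else x < c i).

Definition Xint (c : nat -> R) (K : nat) (x : R) : Prop := c 0%nat <= x <= c K.

Definition Fmap (h : R -> R) (Zp : nat -> R -> Prop) (i : nat) (A : R -> Prop)
  : R -> Prop :=
  rclosure (fun y => exists x, A x /\ Zp i x /\ h x = y).

Definition atom_of_word (h : R -> R) (Zp : nat -> R -> Prop) (Z : R -> Prop)
  (w : list nat) : R -> Prop :=
  List.fold_left (fun (A : R -> Prop) (i : nat) => Fmap h Zp i A) w Z.

Definition valid_word (K n : nat) (w : list nat) : Prop :=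
  List.length w = n /\ List.Forall (fun i => (1 <= i <= K)%nat) w.

Definition is_atom (h : R -> R) (Zp : nat -> R -> Prop) (Z : R -> Prop) (K n : nat)
  (A : R -> Prop) : Prop :=
  exists w, valid_word K n w /\ (forall x, A x <-> atom_of_word h Zp Z w x)
            /\ exists x, A x.

Definition attractor (h : R -> R) (Zp : nat -> R -> Prop) (Z : R -> Prop) (K : nat)
  (x : R) : Prop :=
  forall n, (1 <= n)%nat -> exists A, is_atom h Zp Z K n A /\ A x.

Definition DeltaF (c : nat -> R) (N : nat) (x : R) : Prop :=
  exists i, (1 <= i <= N - 1)%nat /\ x = c i.

Definition Xtilde (f : R -> R) (c : nat -> R) (N : nat) (x : R) : Prop :=
  forall n, Xint c N (Nat.iter n f x) /\ ~ DeltaF c N (Nat.iter n f x).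

Definition in_An_x (f : R -> R) (c : nat -> R) (N n : nat) (x : R) (A : R -> Prop)
  : Prop :=
  is_atom f (piece c N) (Xint c N) N n A /\
  exists t, A (Nat.iter (t + n) f x).

Definition c_in_Delta_lr (f : R -> R) (c : nat -> R) (N : nat) (x : R) (i : nat)
  : Prop :=
  (1 <= i <= N - 1)%nat /\
  forall n, (1 <= n)%nat ->
    exists A, in_An_x f c N n x A /\ A (c i) /\
      (exists t, A (Nat.iter (t + n) f x) /\ piece c N i (Nat.iter (t + n) f x)) /\
      (exists t', A (Nat.iter (t' + n) f x) /\
                  piece c N (i + 1) (Nat.iter (t' + n) f x)).

Definition cantor_set (S : R -> Prop) : Prop :=
  (exists x, S x) /\
  (forall x, rclosure S x -> S x) /\
  (exists M, forall x, S x -> Rabs x <= M) /\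
  (forall x, S x -> forall eps, 0 < eps -> exists y, S y /\ y <> x /\ Rabs (y - x) < eps) /\
  (forall a b, a < b -> exists z, a < z < b /\ ~ S z).

Definition gap_endpoint (S : R -> Prop) (p : R) : Prop :=
  S p /\ exists q, S q /\ q <> p /\
    forall z, Rmin p q < z < Rmax p q -> ~ S z.

(* continuous extension of f|X_i, given f = lam x + b i on X_i (propP1) *)
Definition fext (lam : R) (b : nat -> R) (i : nat) (x : R) : R := lam * x + b i.

Definition Lambda_f (f : R -> R) (c : nat -> R) (N : nat) : R -> Prop :=
  attractor f (piece c N) (Xint c N) N.

Definition propP1 (f : R -> R) (lam : R) (b : nat -> R) (c : nat -> R) (N : nat) : Prop :=
  (forall i, (1 <= i <= N - 1)%nat ->
     ~ (forall eps, 0 < eps -> exists delta, 0 < delta /\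
          forall y, Xint c N y -> Rabs (y - c i) < delta ->
            Rabs (f y - f (c i)) < eps)) /\
  0 < lam < 1 /\
  (forall i x, (1 <= i <= N)%nat -> piece c N i x -> f x = lam * x + b i).

Definition propP2 (lam : R) (b : nat -> R) (c : nat -> R) (N : nat) : Prop :=
  (forall i x y, (1 <= i <= N)%nat ->
     c (i - 1)%nat <= x <= c i -> c (i - 1)%nat <= y <= c i ->
     fext lam b i x = fext lam b i y -> x = y) /\
  (forall i j x y, (1 <= i <= N)%nat -> (1 <= j <= N)%nat -> i <> j ->
     c (i - 1)%nat <= x <= c i -> c (j - 1)%nat <= y <= c j ->
     fext lam b i x <> fext lam b j y).

Definition propP3 (f : R -> R) (c : nat -> R) (N : nat) : Prop :=
  cantor_set (Lambda_f f c N).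

Definition propP4 (f : R -> R) (lam : R) (b : nat -> R) (c : nat -> R) (N : nat) : Prop :=
  forall i, (1 <= i <= N - 1)%nat ->
    Xtilde f c N (fext lam b i (c i)) /\ Xtilde f c N (fext lam b (i + 1) (c i)).

Definition orbit_dense_in (f : R -> R) (y : R) (S : R -> Prop) : Prop :=
  forall x, S x -> rclosure (fun z => exists n, z = Nat.iter n f y) x.

Definition propP5 (f : R -> R) (lam : R) (b : nat -> R) (c : nat -> R) (N : nat) : Prop :=
  exists i, (1 <= i <= N - 1)%nat /\
    (orbit_dense_in f (fext lam b i (c i)) (Lambda_f f c N) \/
     orbit_dense_in f (fext lam b (i + 1) (c i)) (Lambda_f f c N)).

Definition propP6 (f : R -> R) (c : nat -> R) (N : nat) : Prop :=
  forall x i, Xtilde f c N x -> (1 <= i <= N - 1)%nat -> c_in_Delta_lr f c N x i.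

Definition in_forward_orbit (f : R -> R) (y z : R) : Prop :=
  exists n, z = Nat.iter n f y.

Definition well_cutting (f : R -> R) (lam : R) (b : nat -> R) (c : nat -> R) (N : nat)
  (xi : nat -> R) : Prop :=
  (forall r, xi r = Nat.iter r f (xi 0%nat)) /\
  Lambda_f f c N (xi 0%nat) /\ Xtilde f c N (xi 0%nat) /\
  forall r,
    ~ gap_endpoint (Lambda_f f c N) (xi r) /\
    ~ in_forward_orbit f (c 0%nat) (xi r) /\
    ~ in_forward_orbit f (c N) (xi r) /\
    (forall i, (1 <= i <= N - 1)%nat ->
       ~ in_forward_orbit f (fext lam b i (c i)) (xi r) /\
       ~ in_forward_orbit f (fext lam b (i + 1) (c i)) (xi r)).

Definition phi (lam : R) (xi : nat -> R) (x : R) : R :=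
  x + Series (fun n => if Nat.ltb 0 n then
                         (if Rlt_dec (xi n) x then lam ^ n else 0) else 0).

Definition Gr (lam : R) (xi : nat -> R) (r : nat) (y : R) : Prop :=
  phi lam xi (xi r) < y <= phi lam xi (xi r) + lam ^ r.

Definition Delta_g (lam : R) (xi : nat -> R) (c : nat -> R) (N : nat) (y : R) : Prop :=
  exists x, (DeltaF c N x \/ x = xi 0%nat) /\ y = phi lam xi x.

Definition gen1_atoms_at_most_one (h : R -> R) (Zp : nat -> R -> Prop) (Z : R -> Prop)
  (K : nat) (D : R -> Prop) : Prop :=
  forall A, is_atom h Zp Z K 1 A ->
    forall y1 y2, A y1 -> A y2 -> D y1 -> D y2 -> y1 = y2.

(* By P2 the N atoms of generation 1 of f are pairwise disjoint, so by the
   pigeonhole principle one of them, A_i0, contains none of the N - 1 points of Delta_f.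
   The part of the Cantor set Lambda_f lying in f_i0([c_{i0-1}, c_i0]) is nonempty (P4, P6),
   closed and perfect, hence uncountable, so it contains a point xi_0 whose forward orbit
   avoids the countably many points forbidden to a well-cutting orbit; by P6 this orbit is
   injective.
   The map phi inserts a gap G_r of length lambda^r after each phi(xi_r), its inverse is
   1-Lipschitz, and g sends G_r to within lambda^(r+1) above phi(xi_(r+1)). Hence an atom of
   generation 1 of g is contained in phi of an atom A_i of generation 1 of f, up to closure,
   and two points of Delta_g in it come from two points of Delta_f U {xi_0} in A_i. If both
   lie in Delta_f they coincide by hypothesis; if one is xi_0 then i = i0, and A_i0 contains
   no point of Delta_f. *)

From Stdlib Require Import Reals Lra Lia List ZArith ClassicalEpsilon Classical.
From Stdlib Require Arith.Cantor.
From Coquelicot Require Import Coquelicot.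
Open Scope R_scope.

(** * The measure n |-> lam ^ n on sets of indices *)

Definition mass (lam : R) (P : nat -> Prop) : R :=
  Series (fun n => if excluded_middle_informative (P n) then lam ^ n else 0).

Lemma Series_zero : Series (fun _ => 0) = 0.
Proof.
  rewrite <- (Series_ext (fun n => 0 * (fun _ => 1) n)) by (intros; ring).
  rewrite Series_scal_l; ring.
Qed.

Section Mass.

Variable lam : R.
Hypothesis lam_pos : 0 < lam.
Hypothesis lam_lt_1 : lam < 1.

Lemma mass_term_bounds (P : nat -> Prop) n :
  0 <= (if excluded_middle_informative (P n) then lam ^ n else 0) <= lam ^ n.
Proof.
  pose proof (pow_le lam n ltac:(lra)).
  destruct excluded_middle_informative; lra.
Qed.

Lemma ex_series_mass (P : nat -> Prop) :
  ex_series (fun n => if excluded_middle_informative (P n) then lam ^ n else 0).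
Proof.
  apply (@ex_series_le R_AbsRing R_CompleteNormedModule _ (fun n => lam ^ n)).
  - intros n. pose proof (mass_term_bounds P n).
    change norm with Rabs. rewrite Rabs_right; simpl; lra.
  - apply ex_series_geom. rewrite Rabs_right; lra.
Qed.

Lemma mass_ext (P Q : nat -> Prop) : (forall n, P n <-> Q n) -> mass lam P = mass lam Q.
Proof.
  intros PQ. apply Series_ext. intros n. specialize (PQ n).
  do 2 destruct excluded_middle_informative; first [reflexivity | tauto].
Qed.

Lemma mass_le (P Q : nat -> Prop) : (forall n, P n -> Q n) -> mass lam P <= mass lam Q.
Proof.
  intros PQ. apply Series_le; [|apply ex_series_mass].
  intros n. pose proof (mass_term_bounds Q n). specialize (PQ n).
  pose proof (pow_le lam n ltac:(lra)).
  do 2 destruct excluded_middle_informative; try tauto; lra.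
Qed.

Lemma mass_empty : mass lam (fun _ => False) = 0.
Proof.
  rewrite <- Series_zero. apply Series_ext. intros n.
  destruct excluded_middle_informative; tauto.
Qed.

Lemma mass_nonneg (P : nat -> Prop) : 0 <= mass lam P.
Proof. rewrite <- mass_empty. apply mass_le. tauto. Qed.

Lemma mass_split (P Q : nat -> Prop) :
  mass lam P = mass lam (fun n => P n /\ Q n) + mass lam (fun n => P n /\ ~ Q n).
Proof.
  unfold mass. rewrite <- Series_plus by apply ex_series_mass.
  apply Series_ext. intros n.
  do 3 destruct excluded_middle_informative; try ring; tauto.
Qed.

Lemma mass_union_le (P Q1 Q2 : nat -> Prop) :
  (forall n, P n -> Q1 n \/ Q2 n) -> mass lam P <= mass lam Q1 + mass lam Q2.
Proof.
  intros PQ. rewrite (mass_split P Q1).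
  apply Rplus_le_compat; apply mass_le; intros n; specialize (PQ n); tauto.
Qed.

Lemma mass_singleton r : mass lam (fun n => n = r) = lam ^ r.
Proof.
  unfold mass. rewrite (Series_incr_n_aux _ r).
  2:{ intros k Hk. destruct excluded_middle_informative; [lia|reflexivity]. }
  rewrite Series_incr_1.
  2:{ apply (ex_series_incr_n (fun n => if excluded_middle_informative (n = r)
                                         then lam ^ n else 0) r), ex_series_mass. }
  rewrite (Series_ext _ (fun _ => 0)), Series_zero.
  - destruct excluded_middle_informative; [rewrite Nat.add_0_r; ring|lia].
  - intros k. destruct excluded_middle_informative; [lia|reflexivity].
Qed.

Lemma mass_ge_pow (P : nat -> Prop) r : P r -> lam ^ r <= mass lam P.
Proof. intros Pr. rewrite <- mass_singleton. apply mass_le. intros n ->. exact Pr. Qed.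

Lemma mass_tail M : mass lam (fun n => (M < n)%nat) = lam ^ S M / (1 - lam).
Proof.
  unfold mass. rewrite (Series_incr_n_aux _ (S M)).
  2:{ intros k Hk. destruct excluded_middle_informative; [lia|reflexivity]. }
  rewrite (Series_ext _ (fun k => lam ^ S M * lam ^ k)).
  - rewrite Series_scal_l, Series_geom by (rewrite Rabs_right; lra). reflexivity.
  - intros k. destruct excluded_middle_informative; [apply pow_add|lia].
Qed.

Lemma mass_tail_small eps : 0 < eps -> exists M, mass lam (fun n => (M < n)%nat) < eps.
Proof.
  intros Heps.
  destruct (pow_lt_1_zero lam ltac:(rewrite Rabs_right; lra) (eps * (1 - lam)))
    as [M HM]; [nra|].
  exists M. rewrite mass_tail. specialize (HM (S M) ltac:(lia)).
  rewrite Rabs_right in HM by (apply Rle_ge, pow_le; lra).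
  apply (Rmult_lt_reg_r (1 - lam)); [lra|]. field_simplify; lra.
Qed.

End Mass.

Lemma finite_pos_lower_bound (P : nat -> Prop) (g : nat -> R) M :
  (forall n, (n <= M)%nat -> P n -> 0 < g n) ->
  exists eta, 0 < eta /\ forall n, (n <= M)%nat -> P n -> eta <= g n.
Proof.
  induction M as [|M IH]; intros Hpos.
  - destruct (classic (P 0%nat)) as [P0|nP0].
    + exists (g 0%nat). split; [auto|].
      intros n Hn Pn. replace n with 0%nat by lia. lra.
    + exists 1. split; [lra|]. intros n Hn Pn. replace n with 0%nat in Pn by lia. tauto.
  - destruct IH as [e [He Hle]]; [intros n Hn; apply Hpos; lia|].
    destruct (classic (P (S M))) as [PS|nPS].
    + exists (Rmin e (g (S M))). split; [apply Rmin_pos; auto|].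
      intros n Hn Pn. destruct (Nat.eq_dec n (S M)) as [->|ne]; [apply Rmin_r|].
      eapply Rle_trans; [apply Rmin_l|]. apply Hle; [lia|auto].
    + exists e. split; [auto|]. intros n Hn Pn.
      destruct (Nat.eq_dec n (S M)) as [->|ne]; [tauto|]. apply Hle; [lia|auto].
Qed.

Lemma lub_approx (E : R -> Prop) s eps :
  is_lub E s -> 0 < eps -> exists x, E x /\ s - eps < x.
Proof.
  intros [_ s_least] Heps. apply NNPP. intros Hno.
  enough (s <= s - eps) by lra.
  apply s_least. intros x Ex. apply Rnot_lt_le. intros Hx. apply Hno. eauto.
Qed.

Lemma pigeonhole (n k : nat) (Rel : nat -> nat -> Prop) :
  (forall i, (1 <= i <= n)%nat -> exists j, (1 <= j <= k)%nat /\ Rel i j) ->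
  (forall i i' j, (1 <= i <= n)%nat -> (1 <= i' <= n)%nat -> Rel i j -> Rel i' j -> i = i') ->
  (n <= k)%nat.
Proof.
  intros Hex Hinj.
  set (sel i := epsilon (inhabits 0%nat) (fun j => (1 <= j <= k)%nat /\ Rel i j)).
  assert (Hsel : forall i, (1 <= i <= n)%nat -> (1 <= sel i <= k)%nat /\ Rel i (sel i))
    by (intros i Hi; apply epsilon_spec, Hex, Hi).
  enough (Hlen : (length (map sel (seq 1 n)) <= length (seq 1 k))%nat)
    by (rewrite length_map, !length_seq in Hlen; exact Hlen).
  apply NoDup_incl_length.
  - apply NoDup_map_NoDup_ForallPairs; [|apply seq_NoDup].
    intros i i' Hi Hi' E. apply in_seq in Hi, Hi'.
    apply (Hinj i i' (sel i)); [lia|lia|apply Hsel; lia|rewrite E; apply Hsel; lia].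
  - intros j Hj. apply in_map_iff in Hj as [i [<- Hi]]. apply in_seq in Hi.
    apply in_seq. specialize (Hsel i ltac:(lia)). lia.
Qed.

(** * The map phi *)

Section Phi.

Variables (lam : R) (xi : nat -> R).
Hypothesis lam_pos : 0 < lam.
Hypothesis lam_lt_1 : lam < 1.

Local Notation phi := (phi lam xi).

Lemma phi_mass x : phi x = x + mass lam (fun n => (0 < n)%nat /\ xi n < x).
Proof.
  unfold phi, mass. f_equal. apply Series_ext. intros n.
  destruct (Nat.ltb_spec 0 n), (Rlt_dec (xi n) x), excluded_middle_informative;
    first [reflexivity | exfalso; tauto | lia].
Qed.

Lemma phi_sub a b :
  a <= b -> phi b - phi a = b - a + mass lam (fun n => (0 < n)%nat /\ a <= xi n < b).
Proof.
  intros Hab. rewrite !phi_mass.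
  rewrite (mass_split lam lam_pos lam_lt_1 _ (fun n => a <= xi n)).
  assert (Hin : mass lam (fun n => ((0 < n)%nat /\ xi n < b) /\ a <= xi n) =
                mass lam (fun n => (0 < n)%nat /\ a <= xi n < b))
    by (apply mass_ext; intros n; tauto).
  assert (Hout : mass lam (fun n => ((0 < n)%nat /\ xi n < b) /\ ~ a <= xi n) =
                 mass lam (fun n => (0 < n)%nat /\ xi n < a)).
  { apply mass_ext. intros n. split.
    - intros [[? ?] ?]. split; [auto|lra].
    - intros [? ?]. repeat split; auto; lra. }
  rewrite Hin, Hout. ring.
Qed.

Lemma phi_sub_ge a b : a <= b -> b - a <= phi b - phi a.
Proof.
  intros Hab. rewrite phi_sub by exact Hab.
  pose proof (mass_nonneg lam lam_pos lam_lt_1 (fun n => (0 < n)%nat /\ a <= xi n < b)). lra.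
Qed.

Lemma phi_sub_ge_jump a b r :
  (1 <= r)%nat -> a <= xi r < b -> b - a + lam ^ r <= phi b - phi a.
Proof.
  intros Hr Hxr. rewrite phi_sub by lra. apply Rplus_le_compat_l.
  apply mass_ge_pow; [lra|lra|split; [lia|exact Hxr]].
Qed.

Lemma phi_le a b : a <= b -> phi a <= phi b.
Proof. intros Hab. pose proof (phi_sub_ge a b Hab). lra. Qed.

Lemma phi_lt a b : a < b -> phi a < phi b.
Proof. intros Hab. pose proof (phi_sub_ge a b ltac:(lra)). lra. Qed.

Lemma phi_le_inv a b : phi a <= phi b -> a <= b.
Proof. intros H. apply Rnot_lt_le. intros Hba. pose proof (phi_lt b a Hba). lra. Qed.

Lemma phi_lt_inv a b : phi a < phi b -> a < b.
Proof. intros H. apply Rnot_le_lt. intros Hba. pose proof (phi_le b a Hba). lra. Qed.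

Lemma phi_inj a b : phi a = phi b -> a = b.
Proof. intros H. apply Rle_antisym; apply phi_le_inv; lra. Qed.

Lemma phi_expanding a b : Rabs (a - b) <= Rabs (phi a - phi b).
Proof.
  destruct (Rle_dec a b) as [Hab|Hab].
  - pose proof (phi_sub_ge a b Hab). rewrite !Rabs_left1; lra.
  - pose proof (phi_sub_ge b a ltac:(lra)). rewrite !Rabs_right; lra.
Qed.

Lemma phi_gap_expanding r t x :
  (1 <= r)%nat -> 0 <= t <= lam ^ r -> Rabs (xi r - x) <= Rabs (phi (xi r) + t - phi x).
Proof.
  intros Hr Ht. destruct (Rle_dec x (xi r)) as [Hx|Hx].
  - pose proof (phi_sub_ge x (xi r) Hx). rewrite !Rabs_right; lra.
  - pose proof (phi_sub_ge_jump (xi r) x r Hr ltac:(lra)). rewrite !Rabs_left1; lra.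
Qed.

Lemma mass_near_small s delta :
  0 < delta -> exists eta, 0 < eta /\ mass lam (fun n => 0 < Rabs (xi n - s) < eta) <= delta.
Proof.
  intros Hd. destruct (mass_tail_small lam lam_pos lam_lt_1 delta Hd) as [M HM].
  destruct (finite_pos_lower_bound (fun n => xi n <> s) (fun n => Rabs (xi n - s)) M)
    as [eta [Heta Hle]].
  { intros n _ Hn. apply Rabs_pos_lt. lra. }
  exists eta. split; [exact Heta|]. eapply Rle_trans; [|left; exact HM].
  apply mass_le; [lra|lra|]. intros n [Hpos Hlt]. apply Nat.nle_gt. intros HnM.
  assert (xi n <> s) by (intros E; rewrite E, Rminus_diag, Rabs_R0 in Hpos; lra).
  specialize (Hle n HnM ltac:(assumption)). lra.
Qed.

Lemma phi_left_limit s delta :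
  0 < delta -> exists eta, 0 < eta /\ forall x, s - eta < x <= s -> phi s - phi x <= s - x + delta.
Proof.
  intros Hd. destruct (mass_near_small s delta Hd) as [eta [Heta Hsmall]].
  exists eta. split; [exact Heta|]. intros x Hx. rewrite phi_sub by lra.
  apply Rplus_le_compat_l. eapply Rle_trans; [|exact Hsmall].
  apply mass_le; [lra|lra|]. intros n [_ Hn]. rewrite Rabs_left by lra. lra.
Qed.

Lemma phi_right_limit s delta :
  0 < delta -> exists eta, 0 < eta /\ forall x, s <= x < s + eta ->
    phi x - phi s <= x - s + mass lam (fun n => (0 < n)%nat /\ xi n = s) + delta.
Proof.
  intros Hd. destruct (mass_near_small s delta Hd) as [eta [Heta Hsmall]].
  exists eta. split; [exact Heta|]. intros x Hx. rewrite phi_sub by lra.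
  rewrite Rplus_assoc. apply Rplus_le_compat_l.
  eapply Rle_trans; [apply mass_union_le; [lra|lra|]|apply Rplus_le_compat_l, Hsmall].
  intros n [Hn Hxn]. destruct (Req_dec (xi n) s) as [E|E]; [left; auto|right].
  split; [apply Rabs_pos_lt; lra|rewrite Rabs_right; lra].
Qed.

Lemma mass_fiber s :
  (forall n m, (1 <= n)%nat -> (1 <= m)%nat -> xi n = xi m -> n = m) ->
  mass lam (fun n => (0 < n)%nat /\ xi n = s) = 0 \/
  exists r, (1 <= r)%nat /\ xi r = s /\ mass lam (fun n => (0 < n)%nat /\ xi n = s) = lam ^ r.
Proof.
  intros Hinj. destruct (classic (exists r, (1 <= r)%nat /\ xi r = s)) as [[r [Hr Hxr]]|Hno].
  - right. exists r. split; [exact Hr|split; [exact Hxr|]].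
    rewrite <- (mass_singleton lam lam_pos lam_lt_1). apply mass_ext. intros n. split.
    + intros [Hn Hxn]. apply Hinj; [lia|lia|congruence].
    + intros ->. split; [lia|exact Hxr].
  - left. rewrite <- (mass_empty lam). apply mass_ext. intros n. split; [|tauto].
    intros [Hn Hxn]. apply Hno. exists n. split; [lia|exact Hxn].
Qed.

(* With s the supremum of {x | phi x <= y}: phi is left continuous at s and jumps there by
   lam ^ r if s = xi r, so y is either phi s or lies in G_r. *)
Lemma phi_cover lo hi y :
  (forall n m, (1 <= n)%nat -> (1 <= m)%nat -> xi n = xi m -> n = m) ->
  lo <= hi -> phi lo <= y <= phi hi ->
  (exists z, lo <= z <= hi /\ y = phi z) \/ (exists r, (1 <= r)%nat /\ Gr lam xi r y).
Proof.
  intros Hinj Hlh Hy.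
  set (E := fun x => lo <= x <= hi /\ phi x <= y).
  destruct (completeness E) as [s Hs].
  { exists hi. intros x Ex. apply Ex. }
  { exists lo. split; [lra|apply Hy]. }
  assert (Hlo : lo <= s) by (apply Hs; split; [lra|apply Hy]).
  assert (Hhi : s <= hi) by (apply Hs; intros x Ex; apply Ex).
  assert (Hbelow : phi s <= y).
  { apply Rnot_lt_le. intros Hys. set (delta := (phi s - y) / 2).
    destruct (phi_left_limit s delta ltac:(unfold delta; lra)) as [eta [Heta Hleft]].
    destruct (lub_approx E s (Rmin eta delta) Hs) as [x [[Hx Hxy] Hsx]].
    { apply Rmin_pos; unfold delta; lra. }
    assert (x <= s) by (apply Hs; split; assumption).
    pose proof (Rmin_l eta delta). pose proof (Rmin_r eta delta).
    specialize (Hleft x ltac:(lra)). unfold delta in *. lra. }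
  set (jump := mass lam (fun n => (0 < n)%nat /\ xi n = s)).
  assert (Habove : s < hi -> y <= phi s + jump).
  { intros Hshi. apply Rnot_lt_le. intros Hys. set (delta := (y - phi s - jump) / 2).
    destruct (phi_right_limit s delta ltac:(unfold delta; lra)) as [eta [Heta Hright]].
    set (h := Rmin (Rmin eta (hi - s)) delta).
    assert (0 < h) by (apply Rmin_pos; [apply Rmin_pos|unfold delta]; lra).
    pose proof (Rmin_l (Rmin eta (hi - s)) delta). pose proof (Rmin_r (Rmin eta (hi - s)) delta).
    pose proof (Rmin_l eta (hi - s)). pose proof (Rmin_r eta (hi - s)).
    assert (Hyx : y < phi (s + h / 2)).
    { apply Rnot_le_lt. intros Hle.
      assert (s + h / 2 <= s) by (apply Hs; split; [split|]; unfold h in *; lra). lra. }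
    specialize (Hright (s + h / 2) ltac:(unfold h in *; lra)).
    fold jump in Hright. unfold h, delta in *. lra. }
  destruct (Req_dec y (phi s)) as [Ey|Ney]; [left; exists s; auto|].
  assert (Hshi : s < hi) by (destruct (Req_dec s hi) as [->|]; lra).
  specialize (Habove Hshi).
  destruct (mass_fiber s Hinj) as [H0|[r [Hr [Hxr Hm]]]].
  - exfalso. fold jump in H0. lra.
  - right. exists r. split; [exact Hr|]. fold jump in Hm. unfold Gr. rewrite Hxr. lra.
Qed.

End Phi.

(** * Countable sets and perfect sets *)

Definition countable (S : R -> Prop) : Prop :=
  exists e : nat -> R, forall x, S x -> exists n, x = e n.

Lemma countable_sub (S T : R -> Prop) :
  (forall x, S x -> T x) -> countable T -> countable S.
Proof. intros ST [e He]. exists e. intros x Sx. apply He, ST, Sx. Qed.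

Lemma countable_range (e : nat -> R) : countable (fun x => exists n, x = e n).
Proof. exists e. auto. Qed.

Lemma countable_Union (S : nat -> R -> Prop) :
  (forall k, countable (S k)) -> countable (fun x => exists k, S k x).
Proof.
  intros HS.
  set (e k := proj1_sig (constructive_indefinite_description _ (HS k))).
  exists (fun n => let (k, m) := Cantor.of_nat n in e k m).
  intros x [k Skx].
  destruct (proj2_sig (constructive_indefinite_description _ (HS k)) x Skx) as [m Hm].
  exists (Cantor.to_nat (k, m)). rewrite Cantor.cancel_of_to. exact Hm.
Qed.

Lemma countable_or (S T : R -> Prop) :
  countable S -> countable T -> countable (fun x => S x \/ T x).
Proof.
  intros HS HT.
  apply countable_sub with (fun x => exists k, (match k with O => S | _ => T end) x).
  - intros x [Sx|Tx]; [exists 0%nat|exists 1%nat]; assumption.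
  - apply countable_Union. intros [|k]; assumption.
Qed.

Lemma countable_tagged (S : R -> Prop) (tag : nat -> R -> Prop) :
  (forall x, S x -> exists n, tag n x) ->
  (forall n x y, S x -> S y -> tag n x -> tag n y -> x = y) -> countable S.
Proof.
  intros Htag Huniq.
  exists (fun n => epsilon (inhabits 0) (fun x => S x /\ tag n x)).
  intros x Sx. destruct (Htag x Sx) as [n Hn]. exists n.
  destruct (epsilon_spec (inhabits 0) (fun x => S x /\ tag n x) (ex_intro _ x (conj Sx Hn)))
    as [Sy Hy].
  exact (Huniq n _ _ Sx Sy Hn Hy).
Qed.

Definition rat_enum (k : nat) : R :=
  let (a, m) := Cantor.of_nat k in
  let (p, q) := Cantor.of_nat a in (INR p - INR q) / INR (S m).

Lemma rat_enum_dense p q : p < q -> exists k, p < rat_enum k < q.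
Proof.
  intros Hpq. destruct (archimed_cor1 (q - p) ltac:(lra)) as [[|m] [Hm Hm0]]; [lia|].
  assert (Hden : 0 < INR (S m)) by (apply lt_0_INR; lia).
  assert (Hstep : 1 < (q - p) * INR (S m)).
  { apply (Rmult_lt_reg_l (/ INR (S m))); [apply Rinv_0_lt_compat; lra|].
    rewrite Rmult_1_r, (Rmult_comm (q - p)), <- Rmult_assoc, Rinv_l by lra. lra. }
  set (z := up (p * INR (S m))). destruct (archimed (p * INR (S m))) as [Hz1 Hz2].
  assert (Ez : IZR z = INR (Z.to_nat z) - INR (Z.to_nat (- z))).
  { rewrite !INR_IZR_INZ. destruct (Z_le_gt_dec 0 z).
    - rewrite Z2Nat.id by lia. replace (Z.to_nat (- z)) with 0%nat by lia. simpl. ring.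
    - replace (Z.to_nat z) with 0%nat by lia. rewrite Z2Nat.id by lia.
      rewrite opp_IZR. simpl. ring. }
  exists (Cantor.to_nat (Cantor.to_nat (Z.to_nat z, Z.to_nat (- z)), m)).
  unfold rat_enum. rewrite !Cantor.cancel_of_to, <- Ez. fold z in Hz1, Hz2.
  split; apply (Rmult_lt_reg_r (INR (S m))); auto;
    unfold Rdiv; rewrite Rmult_assoc, Rinv_l by lra; lra.
Qed.

(* A rational number in the gap determines its endpoint. *)
Lemma countable_gap_endpoint (S : R -> Prop) : countable (gap_endpoint S).
Proof.
  apply countable_sub with (fun p =>
    (S p /\ exists q, p < q /\ forall z, p < z < q -> ~ S z) \/
    (S p /\ exists q, q < p /\ forall z, q < z < p -> ~ S z)).
  { intros p [Sp [q [Sq [Hqp Hgap]]]]. destruct (Rtotal_order p q) as [Hlt|[Heq|Hgt]].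
    - left. split; [exact Sp|]. exists q. split; [exact Hlt|].
      rewrite Rmin_left, Rmax_right in Hgap by lra. exact Hgap.
    - congruence.
    - right. split; [exact Sp|]. exists q. split; [exact Hgt|].
      rewrite Rmin_right, Rmax_left in Hgap by lra. exact Hgap. }
  apply countable_or.
  - apply (countable_tagged _
      (fun k p => p < rat_enum k /\ forall z, p < z <= rat_enum k -> ~ S z)).
    + intros p [Sp [q [Hpq Hgap]]]. destruct (rat_enum_dense p q Hpq) as [k Hk].
      exists k. split; [lra|]. intros z Hz. apply Hgap. lra.
    + intros k x y [Sx _] [Sy _] [Hx Gx] [Hy Gy].
      destruct (Rtotal_order x y) as [Hlt|[Heq|Hgt]]; [|exact Heq|];
        exfalso; [apply (Gx y)|apply (Gy x)]; auto; lra.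
  - apply (countable_tagged _
      (fun k p => rat_enum k < p /\ forall z, rat_enum k <= z < p -> ~ S z)).
    + intros p [Sp [q [Hqp Hgap]]]. destruct (rat_enum_dense q p Hqp) as [k Hk].
      exists k. split; [lra|]. intros z Hz. apply Hgap. lra.
    + intros k x y [Sx _] [Sy _] [Hx Gx] [Hy Gy].
      destruct (Rtotal_order x y) as [Hlt|[Heq|Hgt]]; [|exact Heq|];
        exfalso; [apply (Gy x)|apply (Gx y)]; auto; lra.
Qed.

Lemma halving_small (r : nat -> R) :
  (forall n, 0 < r n) -> (forall n, r (S n) <= r n / 2) ->
  forall eps, 0 < eps -> exists n, r n < eps.
Proof.
  intros Hpos Hhalf eps Heps.
  assert (Hgeom : forall n, r n <= r 0%nat * (1 / 2) ^ n).
  { induction n as [|n IHn]; simpl; [lra|]. specialize (Hhalf n). lra. }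
  destruct (pow_lt_1_zero (1 / 2) ltac:(rewrite Rabs_right; lra) (eps / r 0%nat))
    as [n Hn]; [apply Rdiv_lt_0_compat; auto|].
  exists n. specialize (Hn n (Nat.le_refl n)). specialize (Hgeom n). specialize (Hpos 0%nat).
  rewrite Rabs_right in Hn by (apply Rle_ge, pow_le; lra).
  apply (Rmult_lt_compat_l (r 0%nat)) in Hn; [|auto].
  replace (r 0%nat * (eps / r 0%nat)) with eps in Hn by (field; lra). lra.
Qed.

Lemma nested_balls_limit (p r : nat -> R) :
  (forall n, 0 < r n) -> (forall n, r (S n) <= r n / 2) ->
  (forall n, Rabs (p (S n) - p n) + r (S n) <= r n) ->
  exists x, forall n, Rabs (x - p n) <= r n.
Proof.
  intros Hpos Hhalf Hstep.
  assert (Hdist : forall n m, (n <= m)%nat -> Rabs (p m - p n) + r m <= r n).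
  { intros n m Hnm. induction Hnm as [|m Hnm IH].
    - rewrite Rminus_diag, Rabs_R0. lra.
    - specialize (Hstep m). pose proof (Rabs_triang (p (S m) - p m) (p m - p n)).
      replace (p (S m) - p m + (p m - p n)) with (p (S m) - p n) in * by ring. lra. }
  destruct (Rcomplete.R_complete p) as [x Hx].
  { intros eps Heps. destruct (halving_small r Hpos Hhalf (eps / 2) ltac:(lra)) as [N HN].
    exists N. intros n m Hn Hm. unfold Rdist.
    pose proof (Hdist N n Hn). pose proof (Hdist N m Hm). pose proof (Hpos n). pose proof (Hpos m).
    pose proof (Rabs_triang (p n - p N) (p N - p m)).
    rewrite (Rabs_minus_sym (p N)) in *.
    replace (p n - p N + (p N - p m)) with (p n - p m) in * by ring. lra. }
  exists x. intros n. apply Rnot_lt_le. intros Hfar.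
  destruct (Hx (Rabs (x - p n) - r n) ltac:(lra)) as [M HM].
  specialize (HM (M + n)%nat ltac:(lia)). unfold Rdist in HM. rewrite Rabs_minus_sym in HM.
  pose proof (Hdist n (M + n)%nat ltac:(lia)). pose proof (Hpos (M + n)%nat).
  pose proof (Rabs_triang (x - p (M + n)%nat) (p (M + n)%nat - p n)).
  replace (x - p (M + n)%nat + (p (M + n)%nat - p n)) with (x - p n) in * by ring. lra.
Qed.

Section PerfectSets.

Variable K : R -> Prop.
Hypothesis K_closed : forall x, rclosure K x -> K x.
Hypothesis K_perfect :
  forall x, K x -> forall eps, 0 < eps -> exists y, K y /\ y <> x /\ Rabs (y - x) < eps.

Lemma perfect_shrink_ball p r z :
  K p -> 0 < r -> exists p' r', K p' /\ 0 < r' /\ r' <= r / 2 /\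
    Rabs (p' - p) + r' <= r /\ r' < Rabs (p' - z).
Proof.
  intros Kp Hr. destruct (Req_dec p z) as [<-|Hpz].
  - destruct (K_perfect p Kp (r / 2) ltac:(lra)) as [q [Kq [Hqp Hd]]].
    assert (0 < Rabs (q - p)) by (apply Rabs_pos_lt; lra).
    exists q, (Rmin (r / 4) (Rabs (q - p) / 2)).
    pose proof (Rmin_l (r / 4) (Rabs (q - p) / 2)).
    pose proof (Rmin_r (r / 4) (Rabs (q - p) / 2)).
    repeat split; try assumption; try lra. apply Rmin_pos; lra.
  - assert (0 < Rabs (p - z)) by (apply Rabs_pos_lt; lra).
    exists p, (Rmin (r / 2) (Rabs (p - z) / 2)).
    pose proof (Rmin_l (r / 2) (Rabs (p - z) / 2)).
    pose proof (Rmin_r (r / 2) (Rabs (p - z) / 2)).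
    rewrite Rminus_diag, Rabs_R0. repeat split; try assumption; try lra. apply Rmin_pos; lra.
Qed.

Lemma perfect_avoids_countable (E : R -> Prop) :
  (exists x, K x) -> countable E -> exists x, K x /\ ~ E x.
Proof.
  intros [p0 Kp0] [e He].
  set (good (n : nat) (pr q : R * R) := K (fst q) /\ 0 < snd q /\ snd q <= snd pr / 2 /\
         Rabs (fst q - fst pr) + snd q <= snd pr /\ snd q < Rabs (fst q - e n)).
  set (next n pr := epsilon (inhabits pr) (fun q => K (fst pr) -> 0 < snd pr -> good n pr q)).
  assert (Hnext : forall n pr, K (fst pr) -> 0 < snd pr -> good n pr (next n pr)).
  { intros n pr Kp Hr.
    destruct (perfect_shrink_ball (fst pr) (snd pr) (e n) Kp Hr) as [p' [r' Hgood]].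
    apply (epsilon_spec (inhabits pr) (fun q => K (fst pr) -> 0 < snd pr -> good n pr q));
      [|exact Kp|exact Hr].
    exists (p', r'). intros _ _. exact Hgood. }
  set (ball := nat_rect (fun _ => (R * R)%type) (p0, 1) next).
  assert (Hinv : forall n, K (fst (ball n)) /\ 0 < snd (ball n)).
  { induction n as [|n [Kn Hn]]; [simpl; split; [exact Kp0|lra]|].
    destruct (Hnext n (ball n) Kn Hn) as [? [? _]]. split; assumption. }
  assert (Hgood : forall n, good n (ball n) (ball (S n))).
  { intros n. apply Hnext; apply Hinv. }
  set (p n := fst (ball n)). set (r n := snd (ball n)).
  assert (Hpos : forall n, 0 < r n) by (intros n; apply Hinv).
  assert (Hhalf : forall n, r (S n) <= r n / 2) by (intros n; apply Hgood).
  destruct (nested_balls_limit p r Hpos Hhalf) as [x Hx]; [intros n; apply Hgood|].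
  exists x. split.
  - apply K_closed. intros eps Heps.
    destruct (halving_small r Hpos Hhalf eps Heps) as [n Hn].
    exists (p n). split; [apply Hinv|]. specialize (Hx n). lra.
  - intros Ex. destruct (He x Ex) as [n ->].
    destruct (Hgood n) as [_ [_ [_ [_ Hfar]]]]. specialize (Hx (S n)).
    rewrite Rabs_minus_sym in Hx. unfold p, r in Hx. lra.
Qed.

End PerfectSets.

(** * Atoms of piecewise affine contractions *)

Lemma increasing_lt (c : nat -> R) N :
  (forall i, (i < N)%nat -> c i < c (S i)) -> forall i j, (i < j <= N)%nat -> c i < c j.
Proof.
  intros Hc i j. induction j as [|j IHj]; intros Hij; [lia|].
  destruct (Nat.eq_dec i j) as [->|Hne]; [apply Hc; lia|].
  apply Rlt_trans with (c j); [apply IHj; lia|apply Hc; lia].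
Qed.

Lemma increasing_le (c : nat -> R) N :
  (forall i, (i < N)%nat -> c i < c (S i)) -> forall i j, (i <= j <= N)%nat -> c i <= c j.
Proof.
  intros Hc i j Hij. destruct (Nat.eq_dec i j) as [->|Hne]; [lra|].
  left. apply (increasing_lt c N); [exact Hc|lia].
Qed.

Lemma increasing_locate (c : nat -> R) N x :
  (forall i, (i < N)%nat -> c i < c (S i)) -> c 0%nat <= x < c N ->
  exists i, (i < N)%nat /\ c i <= x < c (S i).
Proof.
  induction N as [|N IHN]; intros Hc Hx; [lra|].
  destruct (Rlt_dec x (c N)) as [Hlt|Hge].
  - destruct IHN as [i [Hi Hxi]]; [intros i Hi; apply Hc; lia|lra|].
    exists i. split; [lia|exact Hxi].
  - exists N. split; [lia|lra].
Qed.

Lemma piece_bounds (c : nat -> R) K i x :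
  (1 <= i)%nat -> piece c K i x -> c (i - 1)%nat <= x <= c i.
Proof.
  intros Hi [Hlo Hhi]. split.
  - destruct (Nat.eqb_spec i 1) as [->|]; [exact Hlo|lra].
  - destruct (Nat.eqb_spec i K) as [->|]; [exact Hhi|lra].
Qed.

Definition convex (A : R -> Prop) : Prop :=
  forall x y z, A x -> A y -> x <= z <= y -> A z.

Lemma piece_convex (c : nat -> R) K i : convex (piece c K i).
Proof.
  intros x y z [Hx1 Hx2] [Hy1 Hy2] Hz. split.
  - destruct (Nat.eqb i 1); lra.
  - destruct (Nat.eqb i K); lra.
Qed.

Lemma Xint_convex (c : nat -> R) K : convex (Xint c K).
Proof. intros x y z [Hx _] [_ Hy] Hz. split; lra. Qed.

Lemma rclosure_incl (A : R -> Prop) x : A x -> rclosure A x.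
Proof. intros Ax eps Heps. exists x. rewrite Rminus_diag, Rabs_R0. auto. Qed.

Lemma rclosure_mono (A B : R -> Prop) x :
  (forall y, A y -> B y) -> rclosure A x -> rclosure B x.
Proof. intros AB Hx eps Heps. destruct (Hx eps Heps) as [a [Aa Ha]]. eauto. Qed.

Lemma rclosure_interval (A : R -> Prop) u v :
  (forall a, A a -> u <= a <= v) -> forall x, rclosure A x -> u <= x <= v.
Proof.
  intros HA x Hx. split; apply Rnot_lt_le; intros Hout.
  - destruct (Hx (u - x) ltac:(lra)) as [a [Aa Ha]]. specialize (HA a Aa).
    rewrite Rabs_left in Ha by lra. lra.
  - destruct (Hx (x - v) ltac:(lra)) as [a [Aa Ha]]. specialize (HA a Aa).
    rewrite Rabs_right in Ha by lra. lra.
Qed.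

Lemma rclosure_diameter (A : R -> Prop) D :
  (forall a a', A a -> A a' -> Rabs (a - a') <= D) ->
  forall x y, rclosure A x -> rclosure A y -> Rabs (x - y) <= D.
Proof.
  intros HD x y Hx Hy. apply Rnot_lt_le. intros Hfar.
  set (eps := (Rabs (x - y) - D) / 2).
  destruct (Hx eps ltac:(unfold eps; lra)) as [a [Aa Ha]].
  destruct (Hy eps ltac:(unfold eps; lra)) as [a' [Aa' Ha']].
  specialize (HD a a' Aa Aa').
  pose proof (Rabs_triang (x - a) (a - y)). pose proof (Rabs_triang (a - a') (a' - y)).
  replace (x - a + (a - y)) with (x - y) in * by ring.
  replace (a - a' + (a' - y)) with (a - y) in * by ring.
  rewrite (Rabs_minus_sym a' y) in *. unfold eps in *. lra.
Qed.

Lemma rclosure_convex (A : R -> Prop) : convex A -> convex (rclosure A).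
Proof.
  intros HA x y z Hx Hy Hz.
  destruct (Req_dec z x) as [->|Hzx]; [exact Hx|].
  destruct (Req_dec z y) as [->|Hzy]; [exact Hy|].
  apply rclosure_incl.
  destruct (Hx (z - x) ltac:(lra)) as [a [Aa Ha]].
  destruct (Hy (y - z) ltac:(lra)) as [a' [Aa' Ha']].
  apply (HA a a'); [exact Aa|exact Aa'|].
  unfold Rabs in *. destruct (Rcase_abs (x - a)), (Rcase_abs (y - a')); lra.
Qed.

Lemma rclosure_segment_end (A B : R -> Prop) p q :
  convex A -> A p -> A q -> q <> p -> (forall z, Rmin p q < z < Rmax p q -> B z) ->
  rclosure (fun x => A x /\ B x) p.
Proof.
  intros HA Ap Aq Hqp HB eps Heps.
  assert (Hd : 0 < Rabs (q - p)) by (apply Rabs_pos_lt; lra).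
  set (t := Rmin (1 / 2) (eps / (2 * Rabs (q - p)))).
  assert (Ht : 0 < t) by (apply Rmin_pos; [lra|apply Rdiv_lt_0_compat; lra]).
  assert (Ht1 : t <= 1 / 2) by apply Rmin_l.
  assert (Hteps : t * Rabs (q - p) <= eps / 2).
  { apply Rle_trans with (eps / (2 * Rabs (q - p)) * Rabs (q - p)).
    - apply Rmult_le_compat_r; [lra|apply Rmin_r].
    - right. field. lra. }
  exists (p + t * (q - p)). split; [split|].
  - destruct (Rle_dec p q) as [Hpq|Hpq].
    + apply (HA p q); [exact Ap|exact Aq|split; nra].
    + apply (HA q p); [exact Aq|exact Ap|split; nra].
  - apply HB. destruct (Rle_dec p q) as [Hpq|Hpq].
    + rewrite Rmin_left, Rmax_right by lra. split; nra.
    + rewrite Rmin_right, Rmax_left by lra. split; nra.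
  - replace (p - (p + t * (q - p))) with (- (t * (q - p))) by ring.
    rewrite Rabs_Ropp, Rabs_mult, (Rabs_right t) by lra. lra.
Qed.

Lemma atom_of_word_snoc (h : R -> R) (Zp : nat -> R -> Prop) (Z : R -> Prop) w i :
  atom_of_word h Zp Z (w ++ i :: nil) = Fmap h Zp i (atom_of_word h Zp Z w).
Proof. unfold atom_of_word. rewrite fold_left_app. reflexivity. Qed.

Lemma is_atom_Fmap (h : R -> R) (Zp : nat -> R -> Prop) (Z : R -> Prop) K n A j :
  is_atom h Zp Z K n A -> (1 <= j <= K)%nat -> (exists y, Fmap h Zp j A y) ->
  is_atom h Zp Z K (S n) (Fmap h Zp j A).
Proof.
  intros [w [[Hlen Hw] [HA _]]] Hj Hne. exists (w ++ j :: nil). split; [split|split].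
  - rewrite length_app, Hlen. simpl. lia.
  - apply Forall_app. split; [exact Hw|constructor; [exact Hj|constructor]].
  - intros y. rewrite atom_of_word_snoc.
    split; apply rclosure_mono; intros z [x [Ax Hx]]; exists x; split; try apply HA; assumption.
  - exact Hne.
Qed.

Definition atom1 (f : R -> R) (c : nat -> R) (N i : nat) : R -> Prop :=
  Fmap f (piece c N) i (Xint c N).

Lemma atom1_is_atom (f : R -> R) c N i z :
  (1 <= i <= N)%nat -> atom1 f c N i z -> is_atom f (piece c N) (Xint c N) N 1 (atom1 f c N i).
Proof.
  intros Hi Hz. exists (i :: nil).
  split; [split; [reflexivity|constructor; [exact Hi|constructor]]|].
  split; [reflexivity|exists z; exact Hz].
Qed.

Lemma Lambda_atom1 (f : R -> R) c N z :
  Lambda_f f c N z -> exists i, (1 <= i <= N)%nat /\ atom1 f c N i z.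
Proof.
  intros HL. destruct (HL 1%nat (le_n 1)) as [A [[w [[Hlen Hw] [HA _]]] Az]].
  destruct w as [|i [|? ?]]; try discriminate Hlen.
  inversion Hw as [|? ? Hi _]; subst. exists i. split; [exact Hi|apply HA, Az].
Qed.

Definition piece_image (lam : R) (b c : nat -> R) (i : nat) (z : R) : Prop :=
  lam * c (i - 1)%nat + b i <= z <= lam * c i + b i.

(* The points a well-cutting orbit must avoid; the c_k are included so that the orbit also
   lies in X~_f. *)
Definition exceptional (f : R -> R) (lam : R) (b c : nat -> R) (N : nat) (x : R) : Prop :=
  (exists k, (k <= N)%nat /\ x = c k) \/ gap_endpoint (Lambda_f f c N) x \/
  in_forward_orbit f (c 0%nat) x \/ in_forward_orbit f (c N) x \/
  exists i, (1 <= i <= N - 1)%nat /\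
    (in_forward_orbit f (fext lam b i (c i)) x \/
     in_forward_orbit f (fext lam b (i + 1) (c i)) x).

Lemma countable_exceptional (f : R -> R) lam b c N : countable (exceptional f lam b c N).
Proof.
  repeat apply countable_or.
  - apply (countable_sub _ (fun x => exists k, x = c k)); [|apply countable_range].
    intros x [k [_ Hx]]. eauto.
  - apply countable_gap_endpoint.
  - apply countable_range.
  - apply countable_range.
  - apply (countable_sub _ (fun x => exists i,
             in_forward_orbit f (fext lam b i (c i)) x \/
             in_forward_orbit f (fext lam b (i + 1) (c i)) x)).
    + intros x [i [_ Hx]]. eauto.
    + apply countable_Union. intros i. apply countable_or; apply countable_range.
Qed.

Section PiecewiseAffine.

Variables (N : nat) (c b : nat -> R) (lam : R) (f : R -> R).
Hypothesis c_incr : forall i, (i < N)%nat -> c i < c (S i).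
Hypothesis lam_pos : 0 < lam.
Hypothesis lam_lt_1 : lam < 1.
Hypothesis f_affine : forall i x, (1 <= i <= N)%nat -> piece c N i x -> f x = lam * x + b i.
Hypothesis f_maps : forall x, Xint c N x -> Xint c N (f x).

Lemma Xint_cover x :
  Xint c N x ->
  (exists i, (i <= N)%nat /\ x = c i) \/ (exists i, (1 <= i <= N)%nat /\ piece c N i x).
Proof.
  intros [Hlo Hhi]. destruct (Req_dec x (c N)) as [->|HneN]; [left; exists N; auto|].
  destruct (increasing_locate c N x c_incr ltac:(lra)) as [i [Hi Hxi]].
  destruct (Req_dec x (c i)) as [->|Hnei]; [left; exists i; split; [lia|auto]|].
  right. exists (S i). split; [lia|]. split.
  - destruct (Nat.eqb (S i) 1); [lra|]. replace (S i - 1)%nat with i by lia. lra.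
  - destruct (Nat.eqb (S i) N); lra.
Qed.

Lemma piece_of_bounds i x :
  (1 <= i <= N)%nat -> c (i - 1)%nat <= x <= c i ->
  (forall m, (1 <= m <= N - 1)%nat -> x <> c m) -> piece c N i x.
Proof.
  intros Hi Hx Hnc. split.
  - destruct (Nat.eqb_spec i 1) as [->|Hi1]; [exact (proj1 Hx)|].
    assert (x <> c (i - 1)%nat) by (apply Hnc; lia). lra.
  - destruct (Nat.eqb_spec i N) as [->|HiN]; [exact (proj2 Hx)|].
    assert (x <> c i) by (apply Hnc; lia). lra.
Qed.

Lemma piece_midpoint i :
  (1 <= i <= N)%nat ->
  Xint c N ((c (i - 1)%nat + c i) / 2) /\ piece c N i ((c (i - 1)%nat + c i) / 2).
Proof.
  intros Hi.
  assert (c (i - 1)%nat < c i) by (apply (increasing_lt c N); [exact c_incr|lia]).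
  assert (c 0%nat <= c (i - 1)%nat) by (apply (increasing_le c N); [exact c_incr|lia]).
  assert (c i <= c N) by (apply (increasing_le c N); [exact c_incr|lia]).
  split; [split; lra|split].
  - destruct (Nat.eqb i 1); lra.
  - destruct (Nat.eqb i N); lra.
Qed.

Lemma countable_preimage (E : R -> Prop) :
  countable E -> countable (fun x => Xint c N x /\ E (f x)).
Proof.
  intros [e He].
  apply countable_sub with (fun x => (exists k, x = c k) \/
                                      exists i, exists n, x = (e n - b i) / lam).
  - intros x [HX Efx]. destruct (Xint_cover x HX) as [[k [_ ->]]|[i [Hi Hx]]]; [left; eauto|].
    right. destruct (He _ Efx) as [n Hn]. exists i, n.
    rewrite <- Hn, (f_affine i x Hi Hx). field. lra.
  - apply countable_or; [apply countable_range|].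
    apply countable_Union. intros i. apply countable_range.
Qed.

Lemma countable_orbit_preimage (E : R -> Prop) :
  countable E -> countable (fun x => Xint c N x /\ exists r, E (Nat.iter r f x)).
Proof.
  intros HS.
  assert (Hlevel : forall r, countable (fun x => Xint c N x /\ E (Nat.iter r f x))).
  { induction r as [|r IHr].
    - apply (countable_sub _ E); [intros x [_ Ex]; exact Ex|exact HS].
    - apply (countable_sub _ (fun x => Xint c N x /\
                 (fun y => Xint c N y /\ E (Nat.iter r f y)) (f x))).
      + intros x [HX Hx]. rewrite Nat.iter_succ_r in Hx. auto.
      + apply (countable_preimage (fun y => Xint c N y /\ E (Nat.iter r f y))), IHr. }
  apply (countable_sub _ (fun x => exists r, Xint c N x /\ E (Nat.iter r f x))).
  - intros x [HX [r Hr]]. eauto.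
  - apply countable_Union, Hlevel.
Qed.

Lemma Fmap_convex i A :
  (1 <= i <= N)%nat -> convex A -> convex (Fmap f (piece c N) i A).
Proof.
  intros Hi HA. apply rclosure_convex.
  intros y1 y2 z [x1 [A1 [P1 <-]]] [x2 [A2 [P2 <-]]] Hz.
  rewrite !(f_affine i) in Hz by assumption.
  set (x := (z - b i) / lam).
  assert (Hx : x1 <= x <= x2)
    by (unfold x; split; apply (Rmult_le_reg_l lam); auto; field_simplify; lra).
  assert (Px : piece c N i x) by (apply (piece_convex c N i x1 x2); auto).
  exists x. split; [apply (HA x1 x2); auto|]. split; [exact Px|].
  rewrite (f_affine i x Hi Px). unfold x. field. lra.
Qed.

Lemma atom_convex w :
  List.Forall (fun i => (1 <= i <= N)%nat) w -> convex (atom_of_word f (piece c N) (Xint c N) w).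
Proof.
  induction w as [|j w IHw] using rev_ind; intros Hw; [apply Xint_convex|].
  apply Forall_app in Hw as [Hw Hj]. inversion Hj; subst.
  rewrite atom_of_word_snoc. apply Fmap_convex; auto.
Qed.

Lemma atom_diameter w :
  List.Forall (fun i => (1 <= i <= N)%nat) w ->
  forall x y, atom_of_word f (piece c N) (Xint c N) w x ->
  atom_of_word f (piece c N) (Xint c N) w y -> Rabs (x - y) <= lam ^ length w * (c N - c 0%nat).
Proof.
  induction w as [|j w IHw] using rev_ind; intros Hw x y Hx Hy.
  - destruct Hx, Hy. simpl. unfold Rabs. destruct (Rcase_abs (x - y)); lra.
  - apply Forall_app in Hw as [Hw Hj]. inversion Hj; subst.
    rewrite atom_of_word_snoc in Hx, Hy. rewrite length_app, Nat.add_1_r. simpl.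
    revert x y Hx Hy. apply rclosure_diameter.
    intros a a' [z [Az [Pz <-]]] [z' [Az' [Pz' <-]]].
    rewrite (f_affine j z), (f_affine j z') by assumption.
    replace (lam * z + b j - (lam * z' + b j)) with (lam * (z - z')) by ring.
    rewrite Rabs_mult, Rabs_right, Rmult_assoc by lra.
    apply Rmult_le_compat_l; [lra|]. apply IHw; assumption.
Qed.

Lemma atom1_Xint i z : atom1 f c N i z -> Xint c N z.
Proof.
  apply rclosure_interval. intros a [x [HX [_ <-]]]. apply f_maps, HX.
Qed.

Lemma atom1_piece_image i z :
  (1 <= i <= N)%nat -> atom1 f c N i z -> piece_image lam b c i z.
Proof.
  intros Hi. apply rclosure_interval. intros a [x [_ [Px <-]]].
  rewrite (f_affine i x Hi Px). destruct (piece_bounds c N i x ltac:(lia) Px).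
  split; apply Rplus_le_compat_r, Rmult_le_compat_l; lra.
Qed.

Lemma piece_image_disjoint i j z :
  propP2 lam b c N -> (1 <= i <= N)%nat -> (1 <= j <= N)%nat ->
  piece_image lam b c i z -> piece_image lam b c j z -> i = j.
Proof.
  intros [_ Hsep] Hi Hj Hzi Hzj. destruct (Nat.eq_dec i j) as [|Hne]; [assumption|exfalso].
  apply (Hsep i j ((z - b i) / lam) ((z - b j) / lam) Hi Hj Hne).
  - destruct Hzi. split; apply (Rmult_le_reg_l lam); auto; field_simplify; lra.
  - destruct Hzj. split; apply (Rmult_le_reg_l lam); auto; field_simplify; lra.
  - unfold fext. field. lra.
Qed.

Lemma Fmap_fext j A p :
  (1 <= j <= N)%nat -> rclosure (fun x => A x /\ piece c N j x) p ->
  Fmap f (piece c N) j A (fext lam b j p).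
Proof.
  intros Hj Hp eps Heps.
  destruct (Hp (eps / lam) ltac:(apply Rdiv_lt_0_compat; lra)) as [x [[Ax Px] Hx]].
  exists (f x). split; [exists x; auto|].
  rewrite (f_affine j x Hj Px). unfold fext.
  replace (lam * p + b j - (lam * x + b j)) with (lam * (p - x)) by ring.
  rewrite Rabs_mult, Rabs_right by lra.
  apply (Rmult_lt_compat_l lam) in Hx; [|lra].
  replace (lam * (eps / lam)) with eps in Hx by (field; lra). exact Hx.
Qed.

Lemma discontinuity_adjacent_closure i j A q :
  (1 <= i <= N - 1)%nat -> (j = i \/ j = i + 1)%nat -> convex A -> A (c i) -> A q ->
  piece c N j q -> rclosure (fun x => A x /\ piece c N j x) (c i).
Proof.
  intros Hi Hj HA Aci Aq [Pq1 Pq2].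
  destruct Hj as [-> | ->].
  - assert (Hq : q < c i) by (destruct (Nat.eqb_spec i N); [lia|exact Pq2]).
    apply (rclosure_segment_end A _ (c i) q HA Aci Aq ltac:(lra)).
    rewrite Rmin_right, Rmax_left by lra. intros z Hz. split.
    + destruct (Nat.eqb i 1); lra.
    + destruct (Nat.eqb_spec i N); [lia|lra].
  - assert (Hq : c i < q).
    { destruct (Nat.eqb_spec (i + 1) 1); [lia|].
      replace (i + 1 - 1)%nat with i in Pq1 by lia. exact Pq1. }
    apply (rclosure_segment_end A _ (c i) q HA Aci Aq ltac:(lra)).
    rewrite Rmin_left, Rmax_right by lra. intros z Hz. split.
    + destruct (Nat.eqb_spec (i + 1) 1); [lia|]. replace (i + 1 - 1)%nat with i by lia. lra.
    + destruct (Nat.eqb (i + 1) N); lra.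
Qed.

Lemma is_atom_convex n A : is_atom f (piece c N) (Xint c N) N n A -> convex A.
Proof.
  intros [w [[_ Hw] [HA _]]] y1 y2 z Ay1 Ay2 Hz.
  apply HA. apply (atom_convex w Hw y1 y2 z); [apply HA|apply HA|]; assumption.
Qed.

Lemma one_sided_limit_in_Lambda x i j :
  propP6 f c N -> Xtilde f c N x -> (1 <= i <= N - 1)%nat -> (j = i \/ j = i + 1)%nat ->
  Lambda_f f c N (fext lam b j (c i)) /\ atom1 f c N j (fext lam b j (c i)).
Proof.
  intros HP6 Hx Hi Hj.
  assert (Hj' : (1 <= j <= N)%nat) by lia.
  assert (Hci : Xint c N (c i)) by (split; apply (increasing_le c N); auto; lia).
  assert (Hatom1 : atom1 f c N j (fext lam b j (c i))).
  { destruct (piece_midpoint j Hj') as [Xq Pq].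
    apply Fmap_fext; [exact Hj'|].
    exact (discontinuity_adjacent_closure i j _ _ Hi Hj (Xint_convex c N) Hci Xq Pq). }
  split; [|exact Hatom1].
  intros [|[|n]] Hn; [lia| |].
  { exists (atom1 f c N j). split; [exact (atom1_is_atom f c N j _ Hj' Hatom1)|exact Hatom1]. }
  destruct (HP6 x i Hx Hi) as [_ Hlr].
  destruct (Hlr (S n) ltac:(lia)) as [A [[HA _] [Aci [[t [At Pt]] [t' [At' Pt']]]]]].
  assert (Hq : exists q, A q /\ piece c N j q) by (destruct Hj as [-> | ->]; eauto).
  destruct Hq as [q [Aq Pq]].
  assert (HF : Fmap f (piece c N) j A (fext lam b j (c i))).
  { apply Fmap_fext; [exact Hj'|].
    exact (discontinuity_adjacent_closure i j A q Hi Hj (is_atom_convex _ _ HA) Aci Aq Pq). }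
  exists (Fmap f (piece c N) j A). split; [|exact HF].
  apply is_atom_Fmap; [exact HA|exact Hj'|eauto].
Qed.

Lemma orbit_approaches_discontinuity x i :
  propP6 f c N -> Xtilde f c N x -> (1 <= i <= N - 1)%nat ->
  forall eps, 0 < eps -> exists k, Rabs (Nat.iter k f x - c i) < eps.
Proof.
  intros HP6 Hx Hi eps Heps.
  assert (Hlen : 0 < c N - c 0%nat) by (pose proof (increasing_lt c N c_incr 0 N ltac:(lia)); lra).
  destruct (pow_lt_1_zero lam ltac:(rewrite Rabs_right; lra) (eps / (c N - c 0%nat)))
    as [n Hn]; [apply Rdiv_lt_0_compat; lra|].
  specialize (Hn (S n) ltac:(lia)). rewrite Rabs_right in Hn by (apply Rle_ge, pow_le; lra).
  destruct (HP6 x i Hx Hi) as [_ Hlr].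
  destruct (Hlr (S n) ltac:(lia)) as [A [[[w [[Hlen_w Hw] [HA _]]] _] [Aci [[t [At _]] _]]]].
  exists (t + S n)%nat.
  pose proof (atom_diameter w Hw _ _ (proj1 (HA _) At) (proj1 (HA _) Aci)) as Hdiam.
  rewrite Hlen_w in Hdiam.
  apply (Rmult_lt_compat_r (c N - c 0%nat)) in Hn; [|exact Hlen].
  replace (eps / (c N - c 0%nat) * (c N - c 0%nat)) with eps in Hn by (field; lra). lra.
Qed.

(* A periodic orbit is finite, hence stays at positive distance from c_1. *)
Lemma orbit_injective x :
  (2 <= N)%nat -> propP6 f c N -> Xtilde f c N x ->
  forall n m, Nat.iter n f x = Nat.iter m f x -> n = m.
Proof.
  intros HN HP6 Hx.
  enough (Hnot : forall n m, (n < m)%nat -> Nat.iter n f x <> Nat.iter m f x).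
  { intros n m E. destruct (Nat.lt_total n m) as [Hlt|[Heq|Hgt]]; [|exact Heq|].
    - exfalso. exact (Hnot n m Hlt E).
    - exfalso. exact (Hnot m n Hgt (eq_sym E)). }
  intros n m Hnm E.
  assert (Hfinite : forall k, exists k', (k' < m)%nat /\ Nat.iter k f x = Nat.iter k' f x).
  { intros k. induction k as [k IH] using (well_founded_induction Wf_nat.lt_wf).
    destruct (Compare_dec.lt_dec k m) as [Hk|Hk]; [exists k; auto|].
    replace k with ((k - m) + m)%nat by lia. rewrite Nat.iter_add, <- E, <- Nat.iter_add.
    apply IH. lia. }
  destruct (finite_pos_lower_bound (fun _ => True) (fun k => Rabs (Nat.iter k f x - c 1%nat)) m)
    as [delta [Hdelta Hle]].
  { intros k _ _. apply Rabs_pos_lt. intros Hk. apply (proj2 (Hx k)).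
    exists 1%nat. split; [lia|lra]. }
  destruct (orbit_approaches_discontinuity x 1 HP6 Hx ltac:(lia) delta Hdelta) as [k Hk].
  destruct (Hfinite k) as [k' [Hk' Ek]]. rewrite Ek in Hk.
  specialize (Hle k' ltac:(lia) I). lra.
Qed.

Lemma atom1_avoiding_discontinuities :
  (1 <= N)%nat -> propP2 lam b c N ->
  exists i0, (1 <= i0 <= N)%nat /\ forall m, (1 <= m <= N - 1)%nat -> ~ atom1 f c N i0 (c m).
Proof.
  intros HN HP2. apply NNPP. intros Hno.
  enough (HNN : (N <= N - 1)%nat) by lia.
  apply (pigeonhole N (N - 1) (fun i m => atom1 f c N i (c m))).
  - intros i Hi. apply NNPP. intros Hnone. apply Hno. exists i. split; [exact Hi|].
    intros m Hm Am. apply Hnone. exists m. auto.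
  - intros i i' m Hi Hi' Am Am'.
    apply (piece_image_disjoint i i' (c m) HP2 Hi Hi'); apply atom1_piece_image; assumption.
Qed.

(* The intervals f_j([c_(j-1), c_j]) are pairwise disjoint and closed, so near a point of
   the i0-th one every point of Lambda_f lies in it. *)
Lemma Lambda_piece_image_perfect i0 :
  propP2 lam b c N -> (1 <= i0 <= N)%nat ->
  (forall x, Lambda_f f c N x -> forall eps, 0 < eps ->
     exists y, Lambda_f f c N y /\ y <> x /\ Rabs (y - x) < eps) ->
  forall z, Lambda_f f c N z /\ piece_image lam b c i0 z -> forall eps, 0 < eps ->
  exists y, (Lambda_f f c N y /\ piece_image lam b c i0 y) /\ y <> z /\ Rabs (y - z) < eps.
Proof.
  intros HP2 Hi0 Hperf z [Lz Iz] eps Heps.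
  set (gap j := Rmax (lam * c (j - 1)%nat + b j - z) (z - (lam * c j + b j))).
  destruct (finite_pos_lower_bound (fun j => (1 <= j)%nat /\ j <> i0) gap N)
    as [delta [Hdelta Hle]].
  { intros j Hj [Hj1 Hji0]. unfold gap.
    destruct (Rlt_dec 0 (lam * c (j - 1)%nat + b j - z)) as [Hlo|Hlo];
      [eapply Rlt_le_trans; [exact Hlo|apply Rmax_l]|].
    destruct (Rlt_dec 0 (z - (lam * c j + b j))) as [Hhi|Hhi];
      [eapply Rlt_le_trans; [exact Hhi|apply Rmax_r]|].
    exfalso. apply Hji0. apply (piece_image_disjoint j i0 z HP2); [lia|exact Hi0| |exact Iz].
    unfold piece_image. lra. }
  destruct (Hperf z Lz (Rmin eps delta) (Rmin_pos _ _ Heps Hdelta)) as [y [Ly [Hyz Hd]]].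
  pose proof (Rmin_l eps delta). pose proof (Rmin_r eps delta).
  exists y. split; [split; [exact Ly|]|split; [exact Hyz|lra]].
  destruct (Lambda_atom1 f c N y Ly) as [j [Hj Aj]].
  pose proof (atom1_piece_image j y Hj Aj) as Ij.
  destruct (Nat.eq_dec j i0) as [<-|Hji0]; [exact Ij|exfalso].
  specialize (Hle j ltac:(lia) (conj (proj1 Hj) Hji0)).
  assert (gap j <= Rabs (y - z)).
  { unfold gap, piece_image in *. apply Rmax_lub; unfold Rabs; destruct (Rcase_abs (y - z)); lra. }
  lra.
Qed.

Lemma well_cutting_of_avoiding x0 :
  Lambda_f f c N x0 -> Xint c N x0 ->
  (forall r, ~ exceptional f lam b c N (Nat.iter r f x0)) ->
  well_cutting f lam b c N (fun r => Nat.iter r f x0).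
Proof.
  intros Lx0 Xx0 Hgood. split; [reflexivity|split; [exact Lx0|split]].
  - intros n. split.
    + induction n as [|n IHn]; [exact Xx0|]. simpl. apply f_maps, IHn.
    + intros [i [Hi E]]. apply (Hgood n). left. exists i. split; [lia|exact E].
  - intros r. specialize (Hgood r). unfold exceptional in Hgood.
    split; [|split; [|split]].
    + intros Hgap. apply Hgood. right; left. exact Hgap.
    + intros Horb. apply Hgood. right; right; left. exact Horb.
    + intros Horb. apply Hgood. right; right; right; left. exact Horb.
    + intros i Hi. split; intros Horb; apply Hgood; right; right; right; right;
        exists i; split; [exact Hi|left; exact Horb| exact Hi|right; exact Horb].
Qed.

Lemma exists_well_cutting_start :
  (2 <= N)%nat -> propP2 lam b c N -> propP3 f c N -> propP4 f lam b c N -> propP6 f c N ->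
  exists x0 i0, (1 <= i0 <= N)%nat /\
    (forall m, (1 <= m <= N - 1)%nat -> ~ atom1 f c N i0 (c m)) /\
    piece_image lam b c i0 x0 /\ Lambda_f f c N x0 /\ Xint c N x0 /\
    forall r, ~ exceptional f lam b c N (Nat.iter r f x0).
Proof.
  intros HN HP2 [_ [Lclosed [_ [Lperfect _]]]] HP4 HP6.
  destruct (atom1_avoiding_discontinuities ltac:(lia) HP2) as [i0 [Hi0 Hfree]].
  set (K z := Lambda_f f c N z /\ piece_image lam b c i0 z).
  assert (Knonempty : exists z, K z).
  { destruct (HP4 1%nat ltac:(lia)) as [Hx _].
    set (i := if Nat.eq_dec i0 N then (N - 1)%nat else i0).
    destruct (one_sided_limit_in_Lambda _ i i0 HP6 Hx) as [L A1].
    - unfold i. destruct (Nat.eq_dec i0 N); lia.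
    - unfold i. destruct (Nat.eq_dec i0 N); [right|left]; lia.
    - exists (fext lam b i0 (c i)). split; [exact L|apply atom1_piece_image; assumption]. }
  assert (Kclosed : forall z, rclosure K z -> K z).
  { intros z Hz. split.
    - apply Lclosed. revert Hz. apply rclosure_mono. intros y [Ly _]. exact Ly.
    - revert z Hz. apply rclosure_interval. intros y [_ Iy]. exact Iy. }
  destruct (perfect_avoids_countable K Kclosed
              (Lambda_piece_image_perfect i0 HP2 Hi0 Lperfect)
              (fun x => Xint c N x /\ exists r, exceptional f lam b c N (Nat.iter r f x))
              Knonempty (countable_orbit_preimage _ (countable_exceptional f lam b c N)))
    as [x0 [[Lx0 Ix0] Hx0]].
  assert (Xx0 : Xint c N x0).
  { destruct (Lambda_atom1 f c N x0 Lx0) as [j [_ Aj]]. exact (atom1_Xint j x0 Aj). }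
  exists x0, i0. do 5 (split; [assumption|]).
  intros r Hr. apply Hx0. eauto.
Qed.

End PiecewiseAffine.

(** * Atoms of the map g *)

Section ConjugateMap.

Variables (N : nat) (c b : nat -> R) (lam : R) (f : R -> R) (xi : nat -> R) (i0 : nat).
Hypothesis c_incr : forall i, (i < N)%nat -> c i < c (S i).
Hypothesis lam_pos : 0 < lam.
Hypothesis lam_lt_1 : lam < 1.
Hypothesis f_affine : forall i x, (1 <= i <= N)%nat -> piece c N i x -> f x = lam * x + b i.
Hypothesis HP2 : propP2 lam b c N.
Hypothesis f_gen1 : gen1_atoms_at_most_one f (piece c N) (Xint c N) N (DeltaF c N).
Hypothesis i0_range : (1 <= i0 <= N)%nat.
Hypothesis i0_free : forall m, (1 <= m <= N - 1)%nat -> ~ atom1 f c N i0 (c m).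
Hypothesis xi0_image : piece_image lam b c i0 (xi 0%nat).
Hypothesis xi_Xint : forall r, Xint c N (xi r).
Hypothesis xi_not_c : forall r k, (k <= N)%nat -> xi r <> c k.
Hypothesis xi_inj : forall n m, xi n = xi m -> n = m.
Hypothesis xi_succ : forall r, xi (S r) = f (xi r).

Variables (g : R -> R) (d : nat -> R).
Hypothesis g_conj : forall x, Xint c N x -> ~ Delta_g lam xi c N (phi lam xi x) ->
  g (phi lam xi x) = phi lam xi (f x).
Hypothesis g_gap : forall r y, (1 <= r)%nat -> Gr lam xi r y ->
  g y = lam * (y - phi lam xi (xi r)) + phi lam xi (xi (S r)).
Hypothesis d_incr : forall j, (j < N + 1)%nat -> d j < d (S j).
Hypothesis d_points : forall y, (exists j, (j <= N + 1)%nat /\ y = d j) <->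
  (exists x, ((exists i, (i <= N)%nat /\ x = c i) \/ x = xi 0%nat) /\ y = phi lam xi x).

Local Notation phi := (phi lam xi).

Lemma cut_point_Xint x :
  (exists i, (i <= N)%nat /\ x = c i) \/ x = xi 0%nat -> c 0%nat <= x <= c N.
Proof.
  intros [[i [Hi ->]]| ->]; [|apply xi_Xint].
  split; apply (increasing_le c N c_incr); lia.
Qed.

Lemma d_cut_point k :
  (k <= N + 1)%nat ->
  exists e, ((exists i, (i <= N)%nat /\ e = c i) \/ e = xi 0%nat) /\ d k = phi e.
Proof. intros Hk. apply d_points. eauto. Qed.

Lemma cut_point_d e :
  (exists i, (i <= N)%nat /\ e = c i) \/ e = xi 0%nat ->
  exists k, (k <= N + 1)%nat /\ phi e = d k.
Proof. intros He. apply d_points. eauto. Qed.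

Lemma d_first : d 0%nat = phi (c 0%nat).
Proof.
  destruct (d_cut_point 0 ltac:(lia)) as [e [He Ee]].
  destruct (cut_point_d (c 0%nat)) as [k [Hk Ek]]; [left; exists 0%nat; split; [lia|reflexivity]|].
  pose proof (increasing_le d (N + 1) d_incr 0 k ltac:(lia)) as Hle.
  rewrite <- Ek, Ee in Hle. apply (phi_le_inv lam xi lam_pos lam_lt_1) in Hle.
  pose proof (cut_point_Xint e He). rewrite Ee. f_equal. lra.
Qed.

Lemma d_last : d (N + 1)%nat = phi (c N).
Proof.
  destruct (d_cut_point (N + 1) ltac:(lia)) as [e [He Ee]].
  destruct (cut_point_d (c N)) as [k [Hk Ek]]; [left; exists N; split; [lia|reflexivity]|].
  pose proof (increasing_le d (N + 1) d_incr k (N + 1) ltac:(lia)) as Hle.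
  rewrite <- Ek, Ee in Hle. apply (phi_le_inv lam xi lam_pos lam_lt_1) in Hle.
  pose proof (cut_point_Xint e He). rewrite Ee. f_equal. lra.
Qed.

Lemma Delta_g_inner_d y : Delta_g lam xi c N y -> exists k, (1 <= k <= N)%nat /\ y = d k.
Proof.
  intros [x [Hx ->]].
  assert (Hinner : c 0%nat < x < c N).
  { destruct Hx as [[m [Hm ->]]| ->].
    - split; apply (increasing_lt c N c_incr); lia.
    - pose proof (xi_Xint 0). pose proof (xi_not_c 0 0 ltac:(lia)).
      pose proof (xi_not_c 0 N ltac:(lia)). unfold Xint in *. lra. }
  destruct (cut_point_d x) as [k [Hk Ek]].
  { destruct Hx as [[m [Hm ->]]| ->]; [left; exists m; split; [lia|reflexivity]|now right]. }
  exists k. split; [|exact Ek]. split.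
  - destruct k as [|k]; [|lia]. rewrite d_first in Ek.
    apply (phi_inj lam xi lam_pos lam_lt_1) in Ek. lra.
  - destruct (Nat.eq_dec k (N + 1)) as [->|]; [|lia]. rewrite d_last in Ek.
    apply (phi_inj lam xi lam_pos lam_lt_1) in Ek. lra.
Qed.

Lemma piece_d_not_Delta_g j y :
  (1 <= j <= N + 1)%nat -> piece d (N + 1) j y -> ~ Delta_g lam xi c N y.
Proof.
  intros Hj [Hlo Hhi] HD. destruct (Delta_g_inner_d y HD) as [k [Hk ->]].
  destruct (Nat.eqb_spec j 1) as [->|Hj1].
  - destruct (Nat.eqb_spec 1 (N + 1)); [lia|].
    pose proof (increasing_le d (N + 1) d_incr 1 k ltac:(lia)). lra.
  - destruct (Nat.eqb_spec j (N + 1)) as [->|HjN].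
    + pose proof (increasing_le d (N + 1) d_incr k N ltac:(lia)).
      replace (N + 1 - 1)%nat with N in Hlo by lia. lra.
    + destruct (Compare_dec.le_lt_dec k (j - 1)).
      * pose proof (increasing_le d (N + 1) d_incr k (j - 1) ltac:(lia)). lra.
      * pose proof (increasing_le d (N + 1) d_incr j k ltac:(lia)). lra.
Qed.

Lemma piece_d_between j :
  (1 <= j <= N + 1)%nat -> exists i a a', (1 <= i <= N)%nat /\
    d (j - 1)%nat = phi a /\ d j = phi a' /\ c (i - 1)%nat <= a /\ a' <= c i.
Proof.
  intros Hj.
  destruct (d_cut_point (j - 1) ltac:(lia)) as [a [Ha Ea]].
  destruct (d_cut_point j ltac:(lia)) as [a' [Ha' Ea']].
  assert (Haa' : a < a').
  { apply (phi_lt_inv lam xi lam_pos lam_lt_1). rewrite <- Ea, <- Ea'.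
    replace j with (S (j - 1)) at 2 by lia. apply d_incr. lia. }
  assert (Hgap : forall e, (exists i, (i <= N)%nat /\ e = c i) \/ e = xi 0%nat -> ~ a < e < a').
  { intros e He [Hae Hea'].
    destruct (cut_point_d e He) as [k [Hk Ek]].
    apply (phi_lt lam xi lam_pos lam_lt_1) in Hae, Hea'.
    rewrite <- Ea, Ek in Hae. rewrite <- Ea', Ek in Hea'.
    destruct (Compare_dec.le_lt_dec k (j - 1)).
    - pose proof (increasing_le d (N + 1) d_incr k (j - 1) ltac:(lia)). lra.
    - pose proof (increasing_le d (N + 1) d_incr j k ltac:(lia)). lra. }
  pose proof (cut_point_Xint a Ha). pose proof (cut_point_Xint a' Ha').
  destruct (increasing_locate c N a c_incr ltac:(lra)) as [i [Hi [Hia Hai]]].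
  exists (S i), a, a'. replace (S i - 1)%nat with i by lia.
  split; [lia|]. split; [exact Ea|]. split; [exact Ea'|]. split; [exact Hia|].
  apply Rnot_lt_le. intros Hci.
  apply (Hgap (c (S i))); [left; exists (S i); split; [lia|reflexivity]|lra].
Qed.

Lemma piece_d_classify j i a a' y :
  (1 <= j <= N + 1)%nat -> (1 <= i <= N)%nat ->
  d (j - 1)%nat = phi a -> d j = phi a' -> c (i - 1)%nat <= a -> a' <= c i ->
  Xint d (N + 1) y -> piece d (N + 1) j y ->
  (exists z, Xint c N z /\ piece c N i z /\ y = phi z) \/
  (exists r, (1 <= r)%nat /\ Gr lam xi r y /\ piece c N i (xi r)).
Proof.
  intros Hj Hi Ea Ea' Hia Hai [Hy0 HyN] Py.
  destruct (piece_bounds d (N + 1) j y ltac:(lia) Py) as [Hlo Hhi].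
  rewrite Ea in Hlo. rewrite Ea' in Hhi. rewrite d_first in Hy0. rewrite d_last in HyN.
  assert (HnD := piece_d_not_Delta_g j y Hj Py).
  assert (Hc0N : c 0%nat <= c N) by (apply (increasing_le c N c_incr); lia).
  destruct (phi_cover lam xi lam_pos lam_lt_1 (c 0%nat) (c N) y
              (fun n m _ _ E => xi_inj n m E) Hc0N (conj Hy0 HyN))
    as [[z [Hz ->]]|[r [Hr Gry]]].
  - left. exists z. split; [exact Hz|split; [|reflexivity]].
    apply piece_of_bounds; [exact Hi| |].
    + apply (phi_le_inv lam xi lam_pos lam_lt_1) in Hlo, Hhi. lra.
    + intros m Hm ->. apply HnD. exists (c m). split; [left; exists m; auto|reflexivity].
  - right. exists r. split; [exact Hr|split; [exact Gry|]].
    apply piece_of_bounds; [exact Hi| |intros m Hm; apply xi_not_c; lia].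
    destruct Gry as [Gr1 Gr2]. split.
    + apply Rnot_lt_le. intros Hxa.
      pose proof (phi_sub_ge_jump lam xi lam_pos lam_lt_1 (xi r) a r Hr ltac:(lra)). lra.
    + assert (xi r < a') by (apply (phi_lt_inv lam xi lam_pos lam_lt_1); lra). lra.
Qed.

Lemma g_atom1_within_phi_atom1 j :
  (1 <= j <= N + 1)%nat -> exists i, (1 <= i <= N)%nat /\
    forall x, atom1 g d (N + 1) j (phi x) -> atom1 f c N i x.
Proof.
  intros Hj. destruct (piece_d_between j Hj) as [i [a [a' [Hi [Ea [Ea' [Hia Hai]]]]]]].
  exists i. split; [exact Hi|]. intros x Hx eps Heps.
  destruct (Hx eps Heps) as [w [[y [Yd [Yp <-]]] Hw]].
  destruct (piece_d_classify j i a a' y Hj Hi Ea Ea' Hia Hai Yd Yp)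
    as [[z [Xz [Pz ->]]]|[r [Hr [Gry Pr]]]].
  - exists (f z). split; [exists z; auto|].
    rewrite g_conj in Hw by (exact Xz || exact (piece_d_not_Delta_g j _ Hj Yp)).
    eapply Rle_lt_trans; [apply (phi_expanding lam xi lam_pos lam_lt_1)|exact Hw].
  - exists (xi (S r)).
    split; [exists (xi r); split; [apply xi_Xint|split; [exact Pr|symmetry; apply xi_succ]]|].
    rewrite (g_gap r y Hr Gry) in Hw. destruct Gry as [Gr1 Gr2].
    set (t := lam * (y - phi (xi r))).
    assert (Ht : 0 <= t <= lam ^ S r).
    { unfold t. simpl. split; [apply Rmult_le_pos; lra|apply Rmult_le_compat_l; lra]. }
    rewrite Rabs_minus_sym.
    eapply Rle_lt_trans;
      [apply (phi_gap_expanding lam xi lam_pos lam_lt_1 (S r) t x ltac:(lia) Ht)|].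
    rewrite Rabs_minus_sym, (Rplus_comm _ t). exact Hw.
Qed.

Lemma xi0_atom1_index i : (1 <= i <= N)%nat -> atom1 f c N i (xi 0%nat) -> i = i0.
Proof.
  intros Hi Ai. apply (piece_image_disjoint N c b lam lam_pos i i0 (xi 0%nat) HP2 Hi i0_range);
    [apply (atom1_piece_image N c b lam f lam_pos f_affine); assumption|exact xi0_image].
Qed.

Lemma conjugate_gen1_atoms_at_most_one :
  gen1_atoms_at_most_one g (piece d (N + 1)) (Xint d (N + 1)) (N + 1) (Delta_g lam xi c N).
Proof.
  intros A [w [[Hlen Hw] [HA _]]] y1 y2 Ay1 Ay2 [x1 [Hx1 ->]] [x2 [Hx2 ->]].
  destruct w as [|j [|]]; try discriminate Hlen. inversion Hw as [|? ? Hj _]; subst.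
  apply HA in Ay1, Ay2.
  destruct (g_atom1_within_phi_atom1 j Hj) as [i [Hi Hsub]].
  apply Hsub in Ay1, Ay2. f_equal.
  destruct Hx1 as [D1| ->], Hx2 as [D2| ->]; [| | |reflexivity].
  - exact (f_gen1 _ (atom1_is_atom f c N i x1 Hi Ay1) x1 x2 Ay1 Ay2 D1 D2).
  - exfalso. destruct D1 as [m [Hm ->]]. rewrite (xi0_atom1_index i Hi Ay2) in Ay1.
    exact (i0_free m Hm Ay1).
  - exfalso. destruct D2 as [m [Hm ->]]. rewrite (xi0_atom1_index i Hi Ay1) in Ay2.
    exact (i0_free m Hm Ay2).
Qed.

End ConjugateMap.

Theorem lemma9 (N : nat) (c : nat -> R) (f : R -> R) (lam : R) (b : nat -> R) :
  (2 <= N)%nat ->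
  (forall i, (i < N)%nat -> c i < c (S i)) ->
  (forall x, Xint c N x -> Xint c N (f x)) ->
  propP1 f lam b c N -> propP2 lam b c N -> propP3 f c N -> propP4 f lam b c N ->
  propP5 f lam b c N -> propP6 f c N ->
  gen1_atoms_at_most_one f (piece c N) (Xint c N) N (DeltaF c N) ->
  exists xi : nat -> R,
    well_cutting f lam b c N xi /\
    forall (g : R -> R) (d : nat -> R),
      (* g maps [phi(c_0), phi(c_N)] into itself *)
      (forall y, phi lam xi (c 0%nat) <= y <= phi lam xi (c N) ->
                 phi lam xi (c 0%nat) <= g y <= phi lam xi (c N)) ->
      (* g = phi o f o phi^{-1} on phi([c_0,c_N]) \ Delta_g *)
      (forall x, Xint c N x -> ~ Delta_g lam xi c N (phi lam xi x) ->
                 g (phi lam xi x) = phi lam xi (f x)) ->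
      (* g on G_r, r >= 1 *)
      (forall r y, (1 <= r)%nat -> Gr lam xi r y ->
                   g y = lam * (y - phi lam xi (xi r)) + phi lam xi (xi (S r))) ->
      (* d_0 < ... < d_{N+1} are the points of phi({c_0..c_N} ∪ {xi_0}) *)
      (forall j, (j < N + 1)%nat -> d j < d (S j)) ->
      (forall y, (exists j, (j <= N + 1)%nat /\ y = d j) <->
                 (exists x, ((exists i, (i <= N)%nat /\ x = c i) \/ x = xi 0%nat)
                            /\ y = phi lam xi x)) ->
      gen1_atoms_at_most_one g (piece d (N + 1)) (Xint d (N + 1)) (N + 1)
                             (Delta_g lam xi c N).
Proof.
  intros HN c_incr f_maps [_ [[lam_pos lam_lt_1] f_affine]] HP2 HP3 HP4 _ HP6 f_gen1.
  destruct (exists_well_cutting_start N c b lam f c_incr lam_pos f_affine f_maps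
              HN HP2 HP3 HP4 HP6) as [x0 [i0 [Hi0 [Hfree [Ix0 [Lx0 [Xx0 Hgood]]]]]]].
  pose proof (well_cutting_of_avoiding N c b lam f f_maps x0 Lx0 Xx0 Hgood) as Hwc.
  exists (fun r => Nat.iter r f x0). split; [exact Hwc|].
  destruct Hwc as [_ [_ [Htilde _]]].
  intros g d _ g_conj g_gap d_incr d_points.
  apply (conjugate_gen1_atoms_at_most_one N c b lam f (fun r => Nat.iter r f x0) i0
           c_incr lam_pos lam_lt_1 f_affine HP2 f_gen1 Hi0 Hfree Ix0); try assumption.
  - intros r. apply Htilde.
  - intros r k Hk E. apply (Hgood r). left. eauto.
  - apply (orbit_injective N c b lam f c_incr lam_pos lam_lt_1 f_affine x0 HN HP6 Htilde).
  - reflexivity.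
Qed.
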